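(* Let $n\in\mathbb{N}$ and let $\mathcal{F}_1,\dots,\mathcal{F}_{n+1}$ be non-empty collections of closed intervals in $\mathbb{R}$ such that every colorful $(n+1)$-tuple is $n$-pierceable. Then there exist $i\in[n+1]$ and, for every $k\in[n+1]$ with $k\neq i$, an interval $F_k\in\mathcal{F}_k$ such that $\mathcal{F}_i\cup\{F_k: k\in[n+1],\,k\neq i\}$ is $n$-pierceable.
   Context: A family $\mathcal{F}$ of subsets of $\mathbb{R}$ is $n$-pierceable if there is $A\subseteq\mathbb{R}$ with $|A|\le n$ meeting every member of $\mathcal{F}$. A colorful $(n+1)$-tuple from $\mathcal{F}_1,\dots,\mathcal{F}_{n+1}$ is a tuple $(C_1,\dots,C_{n+1})$ with $C_j\in\mathcal{F}_{i_j}$ for pairwise distinct indices $i_1,\dots,i_{n+1}$ (i.e., one member from each family). *)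

From Stdlib Require Import Reals List.
Open Scope R_scope.

Definition rset := R -> Prop.

Definition closed_interval (S : rset) : Prop :=
  exists a b : R, a <= b /\ forall x, S x <-> a <= x <= b.

Definition rfamily := rset -> Prop.

Definition pierceable (n : nat) (F : rfamily) : Prop :=
  exists A : list R, (length A <= n)%nat /\
    forall J, F J -> exists x, In x A /\ J x.

Definition family_of_tuple (m : nat) (C : nat -> rset) : rfamily :=
  fun J => exists i, (i < m)%nat /\ J = C i.

From Stdlib Require Import Reals List Lra Lia Classical ClassicalEpsilon.
Open Scope R_scope.

(* Let p be the infimum of the right
   endpoints of all the intervals (p = -oo if they are unbounded below), and
   call an interval red if it misses p, i.e. lies to the right of p.  Some
   family F_j has members ending arbitrarily close to p, so any choice of red
   intervals from the other families extends by a member of F_j disjoint from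
   all of them.  The point piercing that member is then wasted: colorful tuples
   of red intervals from the families other than F_j are pierced by one point
   fewer, and induction applies to these red parts.  One more point, common to a
   member of F_j and to all non-red members of the resulting F_i (p itself when
   possible, otherwise the right endpoint of a member of F_j ending before every
   member of F_i ends), takes care of the rest.  If some F_i has no red member
   at all, that point and one point per remaining family suffice directly. *)

Lemma pierceable_mono m (F G : rfamily) :
  (forall J, G J -> F J) -> pierceable m F -> pierceable m G.
Proof.
  intros HGF [A [HA HP]]. exists A. split; [exact HA|].
  intros J HJ. exact (HP J (HGF J HJ)).
Qed.

Lemma NoDup_remove_all {A : Type} (eq_dec : forall x y : A, {x = y} + {x <> y})
  (x : A) (l : list A) : NoDup l -> NoDup (remove eq_dec x l).
Proof.
  induction 1 as [|a l Ha _ IH]; simpl; [constructor|].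
  destruct (eq_dec x a); [exact IH|].
  constructor; [|exact IH].
  intros Hin. apply Ha. exact (proj1 (in_remove _ _ _ _ Hin)).
Qed.

Lemma length_remove_NoDup {A : Type} (eq_dec : forall x y : A, {x = y} + {x <> y})
  (x : A) (l : list A) : NoDup l -> In x l -> S (length (remove eq_dec x l)) = length l.
Proof.
  induction 1 as [|a l Ha _ IH]; intros Hx; [destruct Hx|]; simpl.
  destruct (eq_dec x a) as [<-|Hxa].
  - now rewrite notin_remove.
  - simpl. f_equal. apply IH. destruct Hx as [->|Hx]; [congruence|exact Hx].
Qed.

Lemma closed_interval_max J : closed_interval J -> exists b, J b /\ forall x, J x -> x <= b.
Proof.
  intros [a [b [Hab HJ]]]. exists b. split; [apply HJ; lra|].
  intros x Hx. apply HJ in Hx. lra.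
Qed.

Lemma closed_interval_min J : closed_interval J -> exists a, J a /\ forall x, J x -> a <= x.
Proof.
  intros [a [b [Hab HJ]]]. exists a. split; [apply HJ; lra|].
  intros x Hx. apply HJ in Hx. lra.
Qed.

Lemma closed_interval_convex J a b x :
  closed_interval J -> J a -> J b -> a <= x <= b -> J x.
Proof.
  intros [a' [b' [_ HJ]]] Ha Hb Hx. apply HJ in Ha, Hb. apply HJ. lra.
Qed.

Definition reaches_below (F : rfamily) (q : R) : Prop :=
  exists I, F I /\ forall x, I x -> x < q.

Definition stays_above (F : rfamily) (q : R) : Prop :=
  forall J, F J -> exists y, q <= y /\ J y.

Lemma stays_above_of_not_reaches_below F q : ~ reaches_below F q -> stays_above F q.
Proof.
  intros Hn J HJ. apply NNPP. intros Hno. apply Hn. exists J. split; [exact HJ|].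
  intros x Hx. apply Rnot_le_lt. intros Hqx. apply Hno. exists x. split; assumption.
Qed.

Lemma stays_above_le F q q' : q' <= q -> stays_above F q -> stays_above F q'.
Proof.
  intros Hq' Hq J HJ. destruct (Hq J HJ) as [y [Hy HJy]]. exists y. split; [lra|exact HJy].
Qed.

Definition colorful_pierceable (m : nat) (L : list nat) (Fam : nat -> rfamily) : Prop :=
  forall C : nat -> rset, (forall i, In i L -> Fam i (C i)) ->
    pierceable m (fun J => exists i, In i L /\ J = C i).

Definition colorful_conclusion (m : nat) (L : list nat) (Fam : nat -> rfamily) : Prop :=
  exists i, In i L /\ exists F : nat -> rset,
    (forall k, In k L -> k <> i -> Fam k (F k)) /\
    pierceable m (fun T => Fam i T \/ exists k, In k L /\ k <> i /\ T = F k).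

Definition avoids_red (L : list nat) (Fam : nat -> rfamily) (j : nat)
    (Red : rset -> Prop) : Prop :=
  forall C : nat -> rset,
    (forall l, In l L -> l <> j -> Fam l (C l) /\ Red (C l)) ->
    exists I, Fam j I /\ forall l, In l L -> l <> j -> forall x, I x -> ~ C l x.

Definition pierces_nonred (L : list nat) (Fam : nat -> rfamily) (j : nat)
    (Red : rset -> Prop) : Prop :=
  forall k, In k L -> k <> j ->
    exists Fj x, Fam j Fj /\ Fj x /\ forall J, Fam k J -> ~ Red J -> J x.

Definition red_split (L : list nat) (Fam : nat -> rfamily) (j : nat)
    (Red : rset -> Prop) : Prop :=
  In j L /\ avoids_red L Fam j Red /\ pierces_nonred L Fam j Red.

Definition red_part (Fam : nat -> rfamily) (Red : rset -> Prop) : nat -> rfamily :=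
  fun k J => Fam k J /\ Red J.

Section Thresholds.

Variable B : R -> Prop.
Hypothesis B_inhabited : exists q, B q.
Hypothesis B_Rmin : forall q q', B q -> B q' -> B (Rmin q q').

Lemma list_common_witness {A : Type} (P : A -> R -> Prop) (L : list A) :
  (forall a q q', q' <= q -> P a q -> P a q') ->
  (forall a, In a L -> exists q, B q /\ P a q) ->
  exists q, B q /\ forall a, In a L -> P a q.
Proof.
  intros Hdown. induction L as [|a L IH]; intros HL.
  - destruct B_inhabited as [q Hq]. exists q. split; [exact Hq|intros _ []].
  - destruct (HL a (or_introl eq_refl)) as [qa [Hqa Pa]].
    destruct IH as [q [Hq Pq]]; [intros b Hb; apply HL; right; exact Hb|].
    exists (Rmin qa q). split; [now apply B_Rmin|].
    intros b [->|Hb].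
    + apply (Hdown b qa); [apply Rmin_l|exact Pa].
    + apply (Hdown b q); [apply Rmin_r|now apply Pq].
Qed.

Lemma family_reaching_below (L : list nat) (Fam : nat -> rfamily) :
  (forall q, B q -> ~ forall l, In l L -> stays_above (Fam l) q) ->
  exists j, In j L /\ forall q, B q -> reaches_below (Fam j) q.
Proof.
  intros Hnot. apply NNPP. intros Hno.
  destruct (list_common_witness (fun l q => stays_above (Fam l) q) L) as [q [Hq Hall]].
  - intros l q q' Hle. now apply stays_above_le.
  - intros l Hl. apply NNPP. intros Hl'. apply Hno. exists l. split; [exact Hl|].
    intros q Hq. apply NNPP. intros Hr. apply Hl'. exists q. split; [exact Hq|].
    now apply stays_above_of_not_reaches_below.
  - exact (Hnot q Hq Hall).
Qed.

Lemma avoids_red_of_thresholds (L : list nat) (Fam : nat -> rfamily) j Red :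
  (forall q, B q -> reaches_below (Fam j) q) ->
  (forall k J, In k L -> Fam k J -> Red J -> exists a, B a /\ forall x, J x -> a <= x) ->
  avoids_red L Fam j Red.
Proof.
  intros Hbelow Hred C HC.
  destruct (list_common_witness (fun l q => l <> j -> forall x, C l x -> q <= x) L)
    as [q [Hq Hle]].
  - intros l q q' Hqq Hp Hlj x Hx. specialize (Hp Hlj x Hx). lra.
  - intros l Hl. destruct (Nat.eq_dec l j) as [->|Hlj].
    + destruct B_inhabited as [q Hq]. exists q. split; [exact Hq|]. intros Hjj. contradiction.
    + destruct (HC l Hl Hlj) as [HCl HR]. destruct (Hred l (C l) Hl HCl HR) as [a [Ha Hax]].
      exists a. split; [exact Ha|]. intros _. exact Hax.
  - destruct (Hbelow q Hq) as [I [HI HIq]]. exists I. split; [exact HI|].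
    intros l Hl Hlj x HIx HCx. specialize (HIq x HIx). specialize (Hle l Hl Hlj x HCx). lra.
Qed.

End Thresholds.

Section IntervalGeometry.

Variables (L : list nat) (Fam : nat -> rfamily).
Hypothesis Fam_intervals : forall i J, In i L -> Fam i J -> closed_interval J.
Hypothesis Fam_nonempty : forall i, In i L -> exists J, Fam i J.

Lemma red_split_unbounded :
  ~ (exists z, forall l, In l L -> stays_above (Fam l) z) ->
  exists j, red_split L Fam j (fun _ => True).
Proof.
  intros Hunb.
  assert (HB0 : exists q : R, True) by (exists 0; trivial).
  assert (HBmin : forall q q' : R, True -> True -> True) by trivial.
  destruct (family_reaching_below _ HB0 HBmin L Fam) as [j [Hj Hbelow]].
  { intros q _ Hq. apply Hunb. exists q. exact Hq. }
  exists j. split; [exact Hj|split].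
  - apply (avoids_red_of_thresholds _ HB0 HBmin); [exact Hbelow|].
    intros k J Hk HJ _. destruct (closed_interval_min J (Fam_intervals k J Hk HJ)) as [a [_ Ha]].
    exists a. split; [trivial|exact Ha].
  - intros k _ _. destruct (Fam_nonempty j Hj) as [Fj HFj].
    destruct (closed_interval_min Fj (Fam_intervals j Fj Hj HFj)) as [x [Hx _]].
    exists Fj, x. split; [exact HFj|split; [exact Hx|]]. intros J _ HnR. contradiction (HnR I).
Qed.

Section AtInfimum.

Variable p : R.
Hypothesis p_lower_bound : forall l, In l L -> stays_above (Fam l) p.

Lemma red_lies_right k J :
  In k L -> Fam k J -> ~ J p -> exists a, p < a /\ forall x, J x -> a <= x.
Proof.
  intros Hk HJ HJp.
  destruct (closed_interval_min J (Fam_intervals k J Hk HJ)) as [a [Ha Hax]].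
  exists a. split; [|exact Hax].
  apply Rnot_le_lt. intros Hap. destruct (p_lower_bound k Hk J HJ) as [y [Hpy Hy]].
  apply HJp. exact (closed_interval_convex J a y p (Fam_intervals k J Hk HJ) Ha Hy (conj Hap Hpy)).
Qed.

Lemma pierces_nonred_at j :
  In j L -> (forall q, p < q -> reaches_below (Fam j) q) ->
  (exists I, Fam j I /\ I p) \/
    (forall k, In k L -> (forall q, p < q -> reaches_below (Fam k) q) ->
       forall J, Fam k J -> ~ J p) ->
  pierces_nonred L Fam j (fun J => ~ J p).
Proof.
  intros Hj Hbelow Hpref k Hk _.
  destruct (classic (forall q, p < q -> reaches_below (Fam k) q)) as [Hk_below|Hk_above].
  - destruct Hpref as [[I [HI HIp]]|Hnone].
    + exists I, p. split; [exact HI|split; [exact HIp|]]. intros J _ HnR. now apply NNPP.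
    + destruct (Fam_nonempty j Hj) as [Fj HFj].
      destruct (closed_interval_min Fj (Fam_intervals j Fj Hj HFj)) as [x [Hx _]].
      exists Fj, x. split; [exact HFj|split; [exact Hx|]].
      intros J HJ HnR. exfalso. apply (Hnone k Hk Hk_below J HJ). now apply NNPP.
  - (* F_k stays above some q > p; a member of F_j ending before q ends in [p, q). *)
    apply not_all_ex_not in Hk_above. destruct Hk_above as [q Hq].
    apply imply_to_and in Hq. destruct Hq as [Hpq Hnot].
    apply stays_above_of_not_reaches_below in Hnot.
    destruct (Hbelow q Hpq) as [Fj [HFj HFjq]].
    destruct (closed_interval_max Fj (Fam_intervals j Fj Hj HFj)) as [b [Hb Hbmax]].
    exists Fj, b. split; [exact HFj|split; [exact Hb|]].
    intros J HJ HnR. apply NNPP in HnR.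
    destruct (Hnot J HJ) as [y [Hqy Hy]].
    destruct (p_lower_bound j Hj Fj HFj) as [z [Hpz Hz]].
    apply (closed_interval_convex J p y b (Fam_intervals k J Hk HJ) HnR Hy).
    specialize (Hbmax z Hz). specialize (HFjq b Hb). lra.
Qed.

Lemma red_split_at_inf :
  (forall q, p < q -> ~ forall l, In l L -> stays_above (Fam l) q) ->
  exists j, red_split L Fam j (fun J => ~ J p).
Proof.
  intros p_inf.
  assert (HB0 : exists q, p < q) by (exists (p + 1); lra).
  assert (HBmin : forall q q', p < q -> p < q' -> p < Rmin q q')
    by (intros; now apply Rmin_glb_lt).
  assert (Havoid : forall j, (forall q, p < q -> reaches_below (Fam j) q) ->
                     avoids_red L Fam j (fun J => ~ J p)).
  { intros j Hbelow. apply (avoids_red_of_thresholds _ HB0 HBmin); [exact Hbelow|].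
    exact red_lies_right. }
  destruct (classic (exists j, In j L /\ (forall q, p < q -> reaches_below (Fam j) q) /\
                               exists I, Fam j I /\ I p))
    as [[j [Hj [Hbelow HIp]]]|Hnone].
  - exists j. split; [exact Hj|split; [now apply Havoid|]].
    apply pierces_nonred_at; [exact Hj|exact Hbelow|left; exact HIp].
  - destruct (family_reaching_below _ HB0 HBmin L Fam p_inf) as [j [Hj Hbelow]].
    exists j. split; [exact Hj|split; [now apply Havoid|]].
    apply pierces_nonred_at; [exact Hj|exact Hbelow|right].
    intros k Hk Hkbelow J HJ HJp. apply Hnone. exists k. split; [exact Hk|].
    split; [exact Hkbelow|]. exists J. split; assumption.
Qed.

End AtInfimum.

Lemma exists_red_split j0 : In j0 L -> exists j Red, red_split L Fam j Red.
Proof.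
  intros Hj0.
  set (E := fun z => forall l, In l L -> stays_above (Fam l) z).
  destruct (classic (exists z, E z)) as [HE|Hunb].
  - destruct (Fam_nonempty j0 Hj0) as [J0 HJ0].
    destruct (closed_interval_max J0 (Fam_intervals j0 J0 Hj0 HJ0)) as [b0 [_ Hb0]].
    assert (HEbound : bound E).
    { exists b0. intros z Hz. destruct (Hz j0 Hj0 J0 HJ0) as [y [Hzy Hy]].
      specialize (Hb0 y Hy). lra. }
    destruct (completeness E HEbound HE) as [p [Hub Hlub]].
    destruct (red_split_at_inf p) as [j Hsplit].
    + intros l Hl J HJ.
      destruct (closed_interval_max J (Fam_intervals l J Hl HJ)) as [b [Hb Hbmax]].
      exists b. split; [|exact Hb].
      apply Hlub. intros z Hz. destruct (Hz l Hl J HJ) as [y [Hzy Hy]].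
      specialize (Hbmax y Hy). lra.
    + intros q Hpq Hq. specialize (Hub q Hq). lra.
    + exists j, (fun J => ~ J p). exact Hsplit.
  - destruct (red_split_unbounded Hunb) as [j Hsplit].
    exists j, (fun _ => True). exact Hsplit.
Qed.

End IntervalGeometry.

Section ColorfulStep.

Variables (L : list nat) (Fam : nat -> rfamily).
Hypothesis Fam_intervals : forall i J, In i L -> Fam i J -> closed_interval J.
Hypothesis Fam_nonempty : forall i, In i L -> exists J, Fam i J.

Lemma members_with_points :
  exists (G : nat -> rset) (pt : nat -> R), forall l, In l L -> Fam l (G l) /\ G l (pt l).
Proof.
  destruct (choice (fun l (Gx : rset * R) => In l L -> Fam l (fst Gx) /\ fst Gx (snd Gx)))
    as [f Hf].
  { intros l. destruct (classic (In l L)) as [Hl|Hl].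
    - destruct (Fam_nonempty l Hl) as [J HJ].
      destruct (closed_interval_min J (Fam_intervals l J Hl HJ)) as [a [Ha _]].
      exists (J, a). intros _. split; assumption.
    - exists (fun _ => False, 0). intros Hl'. contradiction. }
  exists (fun l => fst (f l)), (fun l => snd (f l)). exact Hf.
Qed.

Lemma not_colorful_pierceable_0 j : In j L -> ~ colorful_pierceable 0 L Fam.
Proof.
  intros Hj Hcol.
  destruct members_with_points as [G [pt HG]].
  destruct (Hcol G (fun l Hl => proj1 (HG l Hl))) as [A [HA HPA]].
  destruct (HPA (G j)) as [x [Hx _]]; [exists j; split; [exact Hj|reflexivity]|].
  destruct A; [exact Hx|simpl in HA; lia].
Qed.

Lemma colorful_conclusion_of_redless m j k Red :
  (length L <= S (S m))%nat -> In j L -> In k L -> k <> j ->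
  (forall J, Fam k J -> ~ Red J) -> pierces_nonred L Fam j Red ->
  colorful_conclusion (S m) L Fam.
Proof.
  intros Hlen Hj Hk Hkj Hnored Hpierce.
  destruct (Hpierce k Hk Hkj) as [Fj [x [HFj [Hx Hxk]]]].
  destruct members_with_points as [G [pt HG]].
  set (L' := remove Nat.eq_dec k (remove Nat.eq_dec j L)).
  exists k. split; [exact Hk|].
  exists (fun l => if Nat.eq_dec l j then Fj else G l). split.
  - intros l Hl _. destruct (Nat.eq_dec l j) as [->|_]; [exact HFj|exact (proj1 (HG l Hl))].
  - exists (x :: map pt L'). split.
    + pose proof (remove_length_lt Nat.eq_dec L j Hj).
      pose proof (remove_length_lt Nat.eq_dec (remove Nat.eq_dec j L) k
                    (in_in_remove _ _ Hkj Hk)).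
      simpl. rewrite length_map. unfold L'. lia.
    + intros T [HT|[l [Hl [Hlk ->]]]].
      * exists x. split; [left; reflexivity|exact (Hxk T HT (Hnored T HT))].
      * destruct (Nat.eq_dec l j) as [_|Hlj].
        -- exists x. split; [left; reflexivity|exact Hx].
        -- exists (pt l). split; [|exact (proj2 (HG l Hl))].
           right. apply in_map. apply in_in_remove; [exact Hlk|].
           apply in_in_remove; assumption.
Qed.

Lemma colorful_pierceable_red_part m j Red :
  In j L -> avoids_red L Fam j Red -> colorful_pierceable (S m) L Fam ->
  colorful_pierceable m (remove Nat.eq_dec j L) (red_part Fam Red).
Proof.
  intros Hj Havoid Hcol C HC.
  destruct (Havoid C) as [I [HIj HIdisj]].
  { intros l Hl Hlj. apply HC. now apply in_in_remove. }
  set (C' := fun l => if Nat.eq_dec l j then I else C l).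
  destruct (Hcol C') as [A [HA HPA]].
  { intros l Hl. unfold C'. destruct (Nat.eq_dec l j) as [->|Hlj]; [exact HIj|].
    apply HC. now apply in_in_remove. }
  destruct (HPA I) as [x [HxA HxI]].
  { exists j. split; [exact Hj|]. unfold C'. now destruct (Nat.eq_dec j j). }
  (* The point piercing I pierces no red C l, so it can be dropped. *)
  exists (remove Req_dec_T x A). split.
  { pose proof (remove_length_lt Req_dec_T A x HxA). lia. }
  intros J [l [Hl ->]]. apply in_remove in Hl. destruct Hl as [Hl Hlj].
  destruct (HPA (C l)) as [y [HyA Hy]].
  { exists l. split; [exact Hl|]. unfold C'. now destruct (Nat.eq_dec l j). }
  exists y. split; [|exact Hy].
  apply in_in_remove; [|exact HyA]. intros ->. exact (HIdisj l Hl Hlj x HxI Hy).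
Qed.

Lemma colorful_conclusion_of_red_part m j Red :
  In j L -> pierces_nonred L Fam j Red ->
  colorful_conclusion m (remove Nat.eq_dec j L) (red_part Fam Red) ->
  colorful_conclusion (S m) L Fam.
Proof.
  intros Hj Hpierce [i [Hi [F' [HF' [A' [HA' HPA']]]]]].
  apply in_remove in Hi. destruct Hi as [Hi Hij].
  destruct (Hpierce i Hi Hij) as [Fj [x [HFj [Hx Hxi]]]].
  exists i. split; [exact Hi|].
  exists (fun l => if Nat.eq_dec l j then Fj else F' l). split.
  - intros l Hl Hli. destruct (Nat.eq_dec l j) as [->|Hlj]; [exact HFj|].
    exact (proj1 (HF' l (in_in_remove _ _ Hlj Hl) Hli)).
  - exists (x :: A'). split; [simpl; lia|].
    intros T [HT|[l [Hl [Hli ->]]]].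
    + destruct (classic (Red T)) as [HR|HR].
      * destruct (HPA' T) as [y [Hy HyT]]; [left; split; assumption|].
        exists y. split; [right|]; assumption.
      * exists x. split; [left; reflexivity|exact (Hxi T HT HR)].
    + destruct (Nat.eq_dec l j) as [_|Hlj].
      * exists x. split; [left; reflexivity|exact Hx].
      * destruct (HPA' (F' l)) as [y [Hy HyT]].
        { right. exists l. split; [now apply in_in_remove|split; [exact Hli|reflexivity]]. }
        exists y. split; [right|]; assumption.
Qed.

End ColorfulStep.

Lemma colorful_piercing (m : nat) : forall (L : list nat) (Fam : nat -> rfamily),
  NoDup L -> length L = S m ->
  (forall i J, In i L -> Fam i J -> closed_interval J) ->
  (forall i, In i L -> exists J, Fam i J) ->
  colorful_pierceable m L Fam -> colorful_conclusion m L Fam.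
Proof.
  induction m as [|m IH]; intros L Fam HND Hlen Fam_intervals Fam_nonempty Hcol;
    assert (Hj0 : exists j0, In j0 L)
      by (destruct L as [|j0 L]; [discriminate|exists j0; left; reflexivity]);
    destruct Hj0 as [j0 Hj0].
  - exfalso. exact (not_colorful_pierceable_0 L Fam Fam_intervals Fam_nonempty j0 Hj0 Hcol).
  - destruct (exists_red_split L Fam Fam_intervals Fam_nonempty j0 Hj0)
      as [j [Red [Hj [Havoid Hpierce]]]].
    destruct (classic (exists k, In k L /\ k <> j /\ forall J, Fam k J -> ~ Red J))
      as [[k [Hk [Hkj Hnored]]]|Hred].
    + apply (colorful_conclusion_of_redless L Fam Fam_intervals Fam_nonempty m j k Red);
        [lia|assumption..].
    + apply (colorful_conclusion_of_red_part L Fam m j Red Hj Hpierce).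
      apply IH.
      * now apply NoDup_remove_all.
      * pose proof (length_remove_NoDup Nat.eq_dec j L HND Hj). lia.
      * intros i J Hi [HJ _]. exact (Fam_intervals i J (proj1 (in_remove _ _ _ _ Hi)) HJ).
      * intros i Hi. apply in_remove in Hi. destruct Hi as [Hi Hij].
        apply NNPP. intros Hno. apply Hred. exists i. split; [exact Hi|split; [exact Hij|]].
        intros J HJ HR. apply Hno. exists J. split; assumption.
      * now apply colorful_pierceable_red_part.
Qed.

Theorem theorem7 (n : nat) (Fam : nat -> rfamily)
  (Hint : forall (i : nat) (J : rset), (i < n + 1)%nat -> Fam i J -> closed_interval J)
  (Hne : forall i : nat, (i < n + 1)%nat -> exists J : rset, Fam i J)
  (Hcol : forall C : nat -> rset,
      (forall i : nat, (i < n + 1)%nat -> Fam i (C i)) ->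
      pierceable n (family_of_tuple (n + 1)%nat C)) :
  exists i : nat, (i < n + 1)%nat /\
    exists F : nat -> rset,
      (forall k : nat, (k < n + 1)%nat -> k <> i -> Fam k (F k)) /\
      pierceable n (fun T => Fam i T \/
                     exists k : nat, (k < n + 1)%nat /\ k <> i /\ T = F k).
Proof.
  assert (Hseq : forall k, In k (seq 0 (n + 1)) <-> (k < n + 1)%nat)
    by (intro k; rewrite in_seq; lia).
  destruct (colorful_piercing n (seq 0 (n + 1)) Fam) as [i [Hi [F [HF HP]]]].
  - apply seq_NoDup.
  - rewrite length_seq. lia.
  - intros i J Hi. apply Hint, Hseq, Hi.
  - intros i Hi. apply Hne, Hseq, Hi.
  - intros C HC. apply (pierceable_mono _ (family_of_tuple (n + 1) C)).
    + intros J [i [Hi ->]]. exists i. split; [apply Hseq, Hi|reflexivity].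
    + apply Hcol. intros i Hi. apply HC, Hseq, Hi.
  - exists i. split; [apply Hseq, Hi|]. exists F. split.
    + intros k Hk. apply HF, Hseq, Hk.
    + revert HP. apply pierceable_mono.
      intros T [HT|[k [Hk [Hki ->]]]]; [left; exact HT|right].
      exists k. split; [apply Hseq, Hk|split; [exact Hki|reflexivity]].
Qed.
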